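(* Let $M,N$ be indecomposable non-projective $A_n^\ell$-modules and let $f\in\mathrm{Hom}(M,N)$ be nonzero with $\mathrm{Im} f=\mathrm{rad}^t(N)$, where $t$ is an integer such that there is no epimorphism from $M$ onto $\mathrm{rad}^s(N)$ for any $s<t$. Then $\underline{f}=0$ if and only if $\underline{\mathrm{Hom}}(M,N)=0$.
   Context: $A_n^\ell=kQ/I$ ($k$ algebraically closed), $Q$ the cyclic quiver with vertices $1,\dots,n$ and arrows $i\to i+1$, $n\to 1$, $I$ generated by all paths of length $\ell+1$. $\underline{\mathrm{Hom}}(M,N)$ is $\mathrm{Hom}(M,N)$ modulo morphisms factoring through projective modules, and $\underline{f}$ is the class of $f$ there. *)

(* Modules over A_n^l = kQ/I, Q the cyclic quiver
   1 -> 2 -> ... -> n -> 1 (vertices indexed by 'I_n, arrow i -> ordS i),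
   I generated by all paths of length l+1.
   A (finite-dimensional) module is given concretely as a representation:
   the space k^d (row vectors), the action of the vertex idempotents e_i
   (matrices E i) and of the sum X of all arrows (X = \sum_i a_i), subject
   to the defining relations of kQ/I.  Right action: v |-> v *m E i, v *m X. *)
From HB Require Import structures.
From mathcomp Require Import all_boot all_order all_algebra.
Set Implicit Arguments. Unset Strict Implicit. Unset Printing Implicit Defensive.
Import Order.TTheory GRing.Theory.
Local Open Scope ring_scope.

Record amod (k : fieldType) (n l : nat) := AMod {
  adim : nat;
  aE : 'I_n -> 'M[k]_adim;
  aX : 'M[k]_adim;
  aE_orth : forall i j : 'I_n, aE i *m aE j = (if i == j then aE i else 0);
  aE_sum : \sum_(i < n) aE i = 1%:M;
  aX_arrow : forall i : 'I_n, aE i *m aX = aE i *m aX *m aE (ordS i);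
  aX_nil : aX ^+ l.+1 = 0 }.

Arguments adim {k n l}.
Arguments aE {k n l}.
Arguments aX {k n l}.

Section Defs.
Variables (k : fieldType) (n l : nat).

Definition is_hom (M N : amod k n l) (F : 'M[k]_(adim M, adim N)) : Prop :=
  (forall i : 'I_n, aE M i *m F = F *m aE N i) /\ aX M *m F = F *m aX N.

Definition projective (P : amod k n l) : Prop :=
  forall (B C : amod k n l) (g : 'M[k]_(adim B, adim C))
         (h : 'M[k]_(adim P, adim C)),
    is_hom g -> row_full g -> is_hom h ->
    exists u : 'M[k]_(adim P, adim B), is_hom u /\ u *m g = h.

Definition submodule (M : amod k n l) (U : 'M[k]_(adim M)) : Prop :=
  (forall i : 'I_n, (U *m aE M i <= U)%MS) /\ (U *m aX M <= U)%MS.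

Definition indecomposable (M : amod k n l) : Prop :=
  (0 < adim M)%N /\
  forall U W : 'M[k]_(adim M), submodule U -> submodule W ->
    (U + W == (1%:M : 'M[k]_(adim M)))%MS ->
    (U :&: W == (0 : 'M[k]_(adim M)))%MS ->
    (U == (0 : 'M[k]_(adim M)))%MS \/ (W == (0 : 'M[k]_(adim M)))%MS.

(* rad^t(N) = N J^t, J the arrow ideal (= rad A): the row space of X^t *)
Definition radpow (N : amod k n l) (t : nat) : 'M[k]_(adim N) := aX N ^+ t.

Definition stably_zero (M N : amod k n l) (F : 'M[k]_(adim M, adim N)) : Prop :=
  exists (P : amod k n l) (G : 'M[k]_(adim M, adim P)) (H : 'M[k]_(adim P, adim N)),
    projective P /\ is_hom G /\ is_hom H /\ F = G *m H.

End Defs.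

(* Indecomposable A_n^l-modules are uniserial.  An indecomposable V is generated by
   one vector m fixed by a vertex idempotent: if X^a is the last nonzero power of X
   and v X^a pairs nontrivially with a column c, the rows v X^(a-p) and the columns
   X^q c pair to a triangular matrix with nonzero diagonal, so the submodule generated
   by v is a direct summand of V, hence all of V.  Its radical layers V X^s are each
   spanned modulo the next by a single vector, so the image of any G : M -> N is some
   rad^s N, and by the minimality of t it lies in rad^t N = Im F.  Lifting m G along F
   to a vector at the vertex of m and extending it to an endomorphism K of M gives
   G = K F.  Thus every morphism M -> N factors through F, and is stably zero when F
   is. *)

From HB Require Import structures.
From mathcomp Require Import all_boot all_order all_algebra.
From mathcomp Require Import zify.
Set Implicit Arguments. Unset Strict Implicit. Unset Printing Implicit Defensive.
Import GRing.Theory.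
Local Open Scope ring_scope.

Lemma direct_sum_genmx_kermx (F : fieldType) m p
    (B : 'M[F]_(p, m)) (C : 'M[F]_(m, p)) :
  B *m C \in unitmx ->
  (<<B>> + kermx C == 1%:M)%MS /\ (<<B>> :&: kermx C == (0 : 'M_m))%MS.
Proof.
move=> BCu; split.
  apply/andP; split; first exact: submx1.
  pose P := C *m invmx (B *m C) *m B.
  rewrite -(subrK P 1%:M) addrC; apply: addmx_sub_adds; first by rewrite genmxE submxMl.
  by apply/sub_kermxP; rewrite mulmxBl mul1mx -!mulmxA mulVmx // mulmx1 subrr.
apply/andP; split; last exact: sub0mx.
apply/rV_subP => x; rewrite sub_capmx genmxE => /andP[/submxP[y ->] /sub_kermxP yBC0].
have -> : y = 0 by rewrite -[y]mulmx1 -(mulmxV BCu) !mulmxA yBC0 mul0mx.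
by rewrite mul0mx sub0mx.
Qed.

Section ModuleCalculus.
Variables (k : fieldType) (n l : nat) (V : amod k n l).
Local Notation d := (adim V).
Local Notation E := (aE V).
Local Notation X := (aX V).

Lemma aE_idem i : E i *m E i = E i.
Proof. by rewrite aE_orth eqxx. Qed.

Lemma aX_aE_ordS j : X *m E (ordS j) = E j *m X.
Proof.
rewrite -[X in LHS]mul1mx -(aE_sum V) !mulmx_suml (bigD1 j) //= big1 ?addr0.
  by rewrite -aX_arrow.
move=> r rj; rewrite aX_arrow -mulmxA aE_orth.
by rewrite (inj_eq (@ordS_inj n)) (negbTE rj) mulmx0.
Qed.

Lemma aX_powS p : X ^+ p.+1 = X *m X ^+ p.
Proof. exact: exprS. Qed.

Lemma aX_powSr p : X ^+ p.+1 = X ^+ p *m X.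
Proof. exact: exprSr. Qed.

Lemma aE_Xpow p j : E j *m X ^+ p = X ^+ p *m E (iter p (@ordS n) j).
Proof.
elim: p j => [|p IH] j /=; first by rewrite expr0 mulmx1 mul1mx.
by rewrite aX_powSr mulmxA IH -mulmxA -aX_aE_ordS mulmxA.
Qed.

Lemma mulmx_Xpow p q : X ^+ p *m X ^+ q = X ^+ (p + q).
Proof. by rewrite mulmxE exprD. Qed.

Lemma aX_pow_sub s t : (t <= s)%N -> (X ^+ s <= X ^+ t)%MS.
Proof. by move=> ts; rewrite -(subnK ts) -mulmx_Xpow submxMl. Qed.

Lemma aX_pow_eq0 q : (l < q)%N -> X ^+ q = 0.
Proof. by move=> lq; rewrite -(subnKC lq) exprD (aX_nil V) mul0r. Qed.

Lemma homogeneous_Xpow_aE (v : 'rV[k]_d) i p j : v *m E i = v ->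
  v *m X ^+ p *m E j = if j == iter p (@ordS n) i then v *m X ^+ p else 0.
Proof.
move=> vE; rewrite -{1}vE -(mulmxA v) aE_Xpow !mulmxA -(mulmxA _ (E _)) aE_orth eq_sym.
by case: ifP => _; rewrite ?mulmx0 // -mulmxA -aE_Xpow mulmxA vE.
Qed.

Lemma exists_homogeneous_row m (A : 'M[k]_(d, m)) : A != 0 ->
  exists i (v : 'rV[k]_d), v *m E i = v /\ v *m A != 0.
Proof.
move=> A0; have [i EiA] : exists i, E i *m A != 0.
  apply/existsP; apply: contraR A0 => /existsPn EA0.
  by rewrite -[A]mul1mx -(aE_sum V) mulmx_suml big1 // => i _; apply/eqP/negbNE/EA0.
have [r rEiA] : exists r, row r (E i *m A) != 0.
  apply/existsP; apply: contraR EiA => /existsPn rEA0.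
  by apply/eqP/row_matrixP => r; rewrite row0; apply/eqP/negbNE/rEA0.
by exists i, (row r (E i)); rewrite -!row_mul aE_idem.
Qed.

Lemma exists_homogeneous_col (u : 'rV[k]_d) : u != 0 ->
  exists i (c : 'cV[k]_d), E i *m c = c /\ u *m c != 0.
Proof.
move=> u0; have [i uEi] : exists i, u *m E i != 0.
  apply/existsP; apply: contraR u0 => /existsPn uE0.
  by rewrite -[u]mulmx1 -(aE_sum V) mulmx_sumr big1 // => i _; apply/eqP/negbNE/uE0.
have /rV0Pn[r uEir] := uEi.
exists i, (E i *m delta_mx r 0); rewrite mulmxA aE_idem; split=> //.
by apply/cV0Pn; exists 0; rewrite mulmxA -colE mxE.
Qed.

Lemma exists_last_nonzero_Xpow : (0 < d)%N -> exists a, X ^+ a != 0 /\ X ^+ a.+1 = 0.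
Proof.
move=> d_gt0; have X0 : exists a, X ^+ a != 0.
  by exists 0%N; rewrite expr0 -mxrank_eq0 mxrank1 -lt0n.
have Xbound a : X ^+ a != 0 -> (a <= l)%N.
  by rewrite leqNgt; apply: contra => /aX_pow_eq0 ->.
have [a Xa Xmax] := ex_maxnP X0 Xbound.
by exists a; split=> //; apply/eqP; apply: contraT => /Xmax; rewrite ltnn.
Qed.

Definition krylov (v : 'rV[k]_d) : 'M[k]_(l.+1, d) := \matrix_(p < l.+1) (v *m X ^+ p).

Definition generates (v : 'rV[k]_d) := (1%:M <= krylov v)%MS.

Lemma Xpow_sub_krylov (v : 'rV[k]_d) p : (v *m X ^+ p <= krylov v)%MS.
Proof.
have [pl | lp] := ltnP p l.+1; last by rewrite aX_pow_eq0 ?mulmx0 ?sub0mx.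
by rewrite -[p]/(nat_of_ord (Ordinal pl))
  -(rowK (fun q : 'I_l.+1 => v *m X ^+ q)) row_sub.
Qed.

Lemma krylov_mulX (v : 'rV[k]_d) : (krylov v *m X <= krylov v)%MS.
Proof.
by apply/row_subP => p; rewrite row_mul rowK -mulmxA -aX_powSr Xpow_sub_krylov.
Qed.

End ModuleCalculus.

Section CyclicSplitting.
Variables (k : fieldType) (n l : nat) (V : amod k n l).
Local Notation d := (adim V).
Local Notation E := (aE V).
Local Notation X := (aX V).
Variables (a : nat) (i i' : 'I_n) (v : 'rV[k]_d) (c : 'cV[k]_d).
Hypotheses (Xa1 : X ^+ a.+1 = 0) (vE : v *m E i = v) (Ec : E i' *m c = c).
Hypothesis vXac : v *m X ^+ a *m c != 0.

Let B : 'M[k]_(a.+1, d) := \matrix_(p < a.+1) (v *m X ^+ (a - p)).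
Let C : 'M[k]_(d, a.+1) := \matrix_(r < d, q < a.+1) (X ^+ q *m c) r 0.

Let mulC_entry (u : 'rV[k]_d) q : (u *m C) 0 q = (u *m X ^+ q *m c) 0 0.
Proof. by rewrite -mulmxA !mxE; apply: eq_bigr => r _; rewrite mxE. Qed.

Let sub_kermxC (u : 'rV[k]_d) :
  (u <= kermx C)%MS = [forall q : 'I_a.+1, u *m X ^+ q *m c == 0].
Proof.
rewrite sub_kermx; apply/eqP/forallP => [uC0 q | uXc0].
  by apply/eqP/matrixP => r s; rewrite !ord1 -mulC_entry uC0 !mxE.
by apply/matrixP => r q; rewrite ord1 mulC_entry (eqP (uXc0 q)) !mxE.
Qed.

Let Xpow_eq0 q : (a < q)%N -> X ^+ q = 0.
Proof. by move=> aq; rewrite -(subnKC aq) exprD Xa1 mul0r. Qed.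

Let submodule_kermxC : submodule (kermx C).
Proof.
split=> [j|]; apply/row_subP => r; rewrite row_mul sub_kermxC; apply/forallP => q;
  have /forallP/(_ _)/eqP uXc0 := eqbLR (sub_kermxC _) (row_sub r (kermx C)).
  rewrite -(mulmxA _ (E j)) aE_Xpow -Ec !mulmxA -(mulmxA _ (E _) (E i')) aE_orth.
  by case: ifP => [/eqP ->|_]; rewrite ?mulmx0 ?mul0mx // -mulmxA Ec uXc0.
rewrite -(mulmxA _ X) -aX_powS.
have [qa | aq] := ltnP q a.
  by rewrite (uXc0 (Ordinal (qa : (q.+1 < a.+1)%N))).
by rewrite Xpow_eq0 ?ltnS // mulmx0 mul0mx.
Qed.

Let submodule_genB : submodule <<B>>%MS.
Proof.
have rowB p : row p B = v *m X ^+ (a - p) by rewrite rowK.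
suff sB j : (B *m E j <= B)%MS /\ (B *m X <= B)%MS.
  split=> [j|]; rewrite (eqmxMr _ (genmxE B)) genmxE; first exact: (sB j).1.
  exact: (sB i).2.
split; apply/row_subP => p; rewrite row_mul rowB.
  by rewrite (homogeneous_Xpow_aE _ _ vE); case: ifP; rewrite ?sub0mx // -rowB row_sub.
rewrite -mulmxA -aX_powSr; case: p => [[|p] /= ltpa].
  by rewrite subn0 Xa1 mulmx0 sub0mx.
have ltpa' : (p < a.+1)%N by rewrite ltnW.
by rewrite -subSn // subSS -[p]/(nat_of_ord (Ordinal ltpa')) -rowB row_sub.
Qed.

Let unitmx_BC : B *m C \in unitmx.
Proof.
have BCE p q : (B *m C) p q = (v *m X ^+ (a - p + q) *m c) 0 0.
  have -> : (B *m C) p q = row p (B *m C) 0 q by rewrite [RHS]mxE.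
  by rewrite row_mul rowK mulC_entry -(mulmxA v) mulmx_Xpow.
have trigBC : is_trig_mx (B *m C).
  apply/is_trig_mxP => p q ltpq; rewrite BCE Xpow_eq0; last by have := ltn_ord p; lia.
  by rewrite mulmx0 mul0mx mxE.
rewrite unitmxE (det_trig trigBC) unitfE prodf_seq_neq0; apply/allP => p _ /=.
rewrite BCE subnK -1?ltnS //; apply: contra vXac => /eqP vXac0.
by apply/eqP/matrixP => r s; rewrite !ord1 vXac0 mxE.
Qed.

Lemma generates_of_indecomposable : indecomposable V -> generates v.
Proof.
case=> _ indV; have [sum cap] := direct_sum_genmx_kermx unitmx_BC.
have [/andP[B0 _] | /andP[K0 _]] := indV _ _ submodule_genB submodule_kermxC sum cap.
  rewrite genmxE in B0; have := submx_trans (row_sub 0 B) B0.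
  rewrite submx0 rowK subn0.
  by move/eqP=> vXa0; case/negP: vXac; rewrite vXa0 mul0mx.
rewrite /generates; apply: submx_trans (proj2 (andP sum)) _.
rewrite addsmx_sub (submx_trans K0) ?sub0mx //.
by rewrite genmxE andbT; apply/row_subP => p; rewrite rowK Xpow_sub_krylov.
Qed.

End CyclicSplitting.

Lemma indecomposable_generated (k : fieldType) (n l : nat) (V : amod k n l) :
  indecomposable V -> exists i (v : 'rV[k]_(adim V)), v *m aE V i = v /\ generates v.
Proof.
move=> indV; have [a [Xa Xa1]] := exists_last_nonzero_Xpow (proj1 indV).
have [i [v [vE vXa]]] := exists_homogeneous_row Xa.
have [i' [c [Ec vXac]]] := exists_homogeneous_col vXa.
by exists i, v; split; last exact: generates_of_indecomposable Xa1 vE Ec vXac indV.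
Qed.

Section Uniserial.
Variables (k : fieldType) (n l : nat) (V : amod k n l).
Local Notation d := (adim V).
Local Notation X := (aX V).
Variable w : 'rV[k]_d.
Hypothesis genw : generates w.

Lemma generates_top : (1%:M <= w + X)%MS.
Proof.
apply: submx_trans genw _; apply/row_subP => -[[|p] ltpl]; rewrite rowK /=.
  by rewrite expr0 mulmx1 addsmxSl.
by rewrite aX_powSr mulmxA (submx_trans (submxMl _ _) (addsmxSr _ _)).
Qed.

Lemma Xpow_sub_top r : (X ^+ r <= w *m X ^+ r + X ^+ r.+1)%MS.
Proof.
rewrite -[X ^+ r in X in (X <= _)%MS]mul1mx aX_powS.
by apply: submx_trans (submxMr _ generates_top) _; rewrite addsmxMr.
Qed.

Lemma top_Xpow_sub (g : 'rV[k]_d) s :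
  (g <= X ^+ s)%MS -> ~~ (g <= X ^+ s.+1)%MS -> (w *m X ^+ s <= g + X ^+ s.+1)%MS.
Proof.
move=> gXs gXs1; have /sub_addsmxP[[u1 u2] /= gE] := submx_trans gXs (Xpow_sub_top s).
rewrite {1}(mx11_scalar u1) mul_scalar_mx in gE.
have u10 : u1 0 0 != 0.
  by apply: contraNneq gXs1 => u10; rewrite gE u10 scale0r add0r submxMl.
have -> : w *m X ^+ s = (u1 0 0)^-1 *: (g - u2 *m X ^+ s.+1).
  by rewrite gE addrK scalerA mulVf // scale1r.
by rewrite scalemx_sub // addmx_sub_adds // eqmx_opp submxMl.
Qed.

Lemma Xpow_sub_of_top m (S : 'M[k]_(m, d)) s : (S *m X <= S)%MS ->
  (w *m X ^+ s <= S + X ^+ s.+1)%MS -> (X ^+ s <= S)%MS.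
Proof.
move=> SX wXs; have SXp p : (S *m X ^+ p <= S)%MS.
  elim: p => [|p IH]; first by rewrite expr0 mulmx1.
  by rewrite aX_powSr mulmxA (submx_trans (submxMr _ IH) SX).
(* Downward induction on r, from X ^+ l.+1 = 0. *)
suff Xr e r : (r + e = l.+1)%N -> (s <= r)%N -> (X ^+ r <= S)%MS.
  have [sl | ls] := leqP s l.+1; first exact: (Xr (l.+1 - s)%N) (subnKC sl) _.
  by rewrite aX_pow_eq0 ?sub0mx // ltnW.
elim: e r => [|e IH] r; first by rewrite addn0 => -> _; rewrite aX_nil sub0mx.
move=> re sr; have Xr1 : (X ^+ r.+1 <= S)%MS.
  by apply: IH; [rewrite addSnnS | apply: leqW].
apply: submx_trans (Xpow_sub_top r) _; rewrite addsmx_sub Xr1 andbT.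
rewrite -(subnKC sr) -mulmx_Xpow mulmxA.
apply: submx_trans (submxMr _ wXs) _; rewrite addsmxMr addsmx_sub SXp.
by rewrite mulmx_Xpow addSn subnKC.
Qed.

End Uniserial.

Section Morphisms.
Variables (k : fieldType) (n l : nat) (M N : amod k n l).

Lemma hom_Xpow (G : 'M[k]_(adim M, adim N)) p :
  is_hom G -> aX M ^+ p *m G = G *m aX N ^+ p.
Proof.
case=> _ homX; elim: p => [|p IH]; first by rewrite !expr0 mul1mx mulmx1.
by rewrite !aX_powSr -mulmxA homX !mulmxA IH.
Qed.

Lemma is_hom_mulmx (P : amod k n l) (F : 'M[k]_(adim M, adim P))
    (G : 'M[k]_(adim P, adim N)) :
  is_hom F -> is_hom G -> is_hom (F *m G).
Proof.
case=> homFE homFX [homGE homGX]; split=> [i|].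
  by rewrite mulmxA homFE -!mulmxA homGE.
by rewrite mulmxA homFX -!mulmxA homGX.
Qed.

Lemma krylov_hom (m : 'rV[k]_(adim M)) (G : 'M[k]_(adim M, adim N)) :
  is_hom G -> krylov m *m G = krylov (m *m G).
Proof.
by move=> homG; apply/row_matrixP => p; rewrite row_mul !rowK -!mulmxA hom_Xpow.
Qed.

Lemma generates_hom_eq (m : 'rV[k]_(adim M)) (G G' : 'M[k]_(adim M, adim N)) :
  generates m -> is_hom G -> is_hom G' -> m *m G = m *m G' -> G = G'.
Proof.
move=> genm homG homG' mGG'; have := mulmxKpV genm; rewrite mul1mx => idE.
by rewrite -[G]mul1mx -[G']mul1mx -idE -!mulmxA !krylov_hom // mGG'.
Qed.

Lemma hom_image_krylov (m : 'rV[k]_(adim M)) (G : 'M[k]_(adim M, adim N)) :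
  generates m -> is_hom G -> (G :=: krylov (m *m G))%MS.
Proof.
move=> genm homG; apply/eqmxP; rewrite -krylov_hom // submxMl andbT.
by rewrite -{1}[G]mul1mx submxMr.
Qed.

Lemma hom_image_radpow (m : 'rV[k]_(adim M)) (w : 'rV[k]_(adim N))
    (G : 'M[k]_(adim M, adim N)) :
  generates m -> generates w -> is_hom G -> exists s, (G == radpow N s)%MS.
Proof.
move=> genm genw homG; have GE := hom_image_krylov genm homG.
rewrite /radpow; set g := m *m G in GE *; have [g0 | g_neq0] := eqVneq g 0.
  exists l.+1; rewrite GE aX_nil g0 sub0mx andbT.
  by apply/row_subP => p; rewrite rowK mul0mx sub0mx.
have gXbound s : (g <= aX N ^+ s)%MS -> (s <= l)%N.
  by rewrite leqNgt; apply: contraTN => /aX_pow_eq0 ->; rewrite submx0.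
have gX0 : exists s, (g <= aX N ^+ s)%MS by exists 0%N; rewrite expr0 submx1.
have [s gXs smax] := ex_maxnP gX0 gXbound.
have gXs1 : ~~ (g <= aX N ^+ s.+1)%MS by apply/negP => /smax; rewrite ltnn.
exists s; rewrite GE; apply/andP; split.
  apply/row_subP => p; rewrite rowK (submx_trans (submxMr _ gXs)) //.
  by rewrite mulmx_Xpow aX_pow_sub ?leq_addr.
rewrite GE; apply: (Xpow_sub_of_top genw) (krylov_mulX g) _.
apply: submx_trans (top_Xpow_sub genw gXs gXs1) _; rewrite addsmxS //.
by have := Xpow_sub_krylov g 0; rewrite expr0 mulmx1.
Qed.

End Morphisms.

Section Endomorphisms.
Variables (k : fieldType) (n l : nat) (V : amod k n l).
Local Notation d := (adim V).
Local Notation E := (aE V).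
Local Notation X := (aX V).

Lemma aE_graded_part (A : 'M[k]_d) j :
  E j *m (\sum_r E r *m A *m E r) = E j *m A *m E j /\
  (\sum_r E r *m A *m E r) *m E j = E j *m A *m E j.
Proof.
split; [rewrite mulmx_sumr | rewrite mulmx_suml]; rewrite (bigD1 j) //= big1 ?addr0.
- by rewrite !mulmxA aE_idem.
- by move=> r rj; rewrite !mulmxA aE_orth eq_sym (negbTE rj) !mul0mx.
- by rewrite -mulmxA aE_idem.
- by move=> r rj; rewrite -mulmxA aE_orth (negbTE rj) mulmx0.
Qed.

Lemma is_hom_graded_part (A : 'M[k]_d) :
  X *m A = A *m X -> is_hom (\sum_r E r *m A *m E r).
Proof.
move=> XA; split=> [j|].
  by rewrite (aE_graded_part A j).1 (aE_graded_part A j).2.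
rewrite mulmx_sumr mulmx_suml (reindex_inj (@ordS_inj n)) /=; apply: eq_bigr => r _.
by rewrite !mulmxA aX_aE_ordS -(mulmxA _ X) XA !mulmxA -(mulmxA _ X) aX_aE_ordS mulmxA.
Qed.

Lemma exists_endo_of_generator (m y : 'rV[k]_d) i :
  generates m -> m *m E i = m -> y *m E i = y -> exists K, is_hom K /\ m *m K = y.
Proof.
move=> genm mE yE; pose beta := y *m pinvmx (krylov m).
have betaK : beta *m krylov m = y.
  by apply: mulmxKpV; apply: submx_trans (submx1 _) genm.
pose q := \sum_(p < l.+1) beta 0 p *: X ^+ p.
have mq : m *m q = y.
  rewrite -betaK [RHS]mulmx_sum_row mulmx_sumr; apply: eq_bigr => p _.
  by rewrite rowK scalemxAr.
have Xq : X *m q = q *m X.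
  rewrite mulmx_sumr mulmx_suml; apply: eq_bigr => p _.
  by rewrite -scalemxAr -scalemxAl -aX_powS aX_powSr.
exists (\sum_r E r *m q *m E r); split; first exact: is_hom_graded_part.
by rewrite -{1}mE -mulmxA (aE_graded_part q i).1 !mulmxA mE mq yE.
Qed.

End Endomorphisms.

Lemma hom_factors_through (k : fieldType) (n l : nat) (M N : amod k n l)
    (m : 'rV[k]_(adim M)) i (F G : 'M[k]_(adim M, adim N)) :
  generates m -> m *m aE M i = m -> is_hom F -> is_hom G -> (m *m G <= F)%MS ->
  exists K, is_hom K /\ G = K *m F.
Proof.
move=> genm mE homF homG mGF; pose y := m *m G *m pinvmx F *m aE M i.
have yF : y *m F = m *m G.
  by rewrite -mulmxA homF.1 mulmxA mulmxKpV // -mulmxA -homG.1 mulmxA mE.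
have yE : y *m aE M i = y by rewrite -mulmxA aE_idem.
have [K [homK mK]] := exists_endo_of_generator genm mE yE.
exists K; split=> //; apply: generates_hom_eq genm homG (is_hom_mulmx homK homF) _.
by rewrite mulmxA mK yF.
Qed.

Lemma stably_zero_mull (k : fieldType) (n l : nat) (L M N : amod k n l)
    (K : 'M[k]_(adim L, adim M)) (F : 'M[k]_(adim M, adim N)) :
  is_hom K -> stably_zero F -> stably_zero (K *m F).
Proof.
move=> homK [P [G [H [projP [homG [homH ->]]]]]].
by exists P, (K *m G), H; rewrite mulmxA; split; [|split; first exact: is_hom_mulmx].
Qed.

Unset Implicit Arguments.

Theorem lemma2p8 (k : closedFieldType) (n l : nat) (M N : amod k n l) :
  (0 < n)%N ->
  indecomposable M -> indecomposable N ->
  ~ projective M -> ~ projective N ->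
  forall (t : nat) (F : 'M[k]_(adim M, adim N)),
    is_hom F -> F != 0 ->
    (F == radpow N t)%MS ->
    (forall s : nat, (s < t)%N ->
       ~ exists G : 'M[k]_(adim M, adim N), is_hom G /\ (G == radpow N s)%MS) ->
    (stably_zero F <->
     forall G : 'M[k]_(adim M, adim N), is_hom G -> stably_zero G).
Proof.
move=> _ indM indN _ _ t F homF _ FX tmin.
split=> [szF G homG | allG]; last exact: allG F homF.
have [i [m [mE genm]]] := indecomposable_generated indM.
have [j [w [_ genw]]] := indecomposable_generated indN.
have [s Gs] := hom_image_radpow genm genw homG.
have ts : (t <= s)%N by rewrite leqNgt; apply/negP => st; apply: (tmin s st); exists G.
have mGF : (m *m G <= F)%MS.
  apply: submx_trans (submxMl m G) _; apply: submx_trans (proj1 (andP Gs)) _.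
  exact: submx_trans (aX_pow_sub _ ts) (proj2 (andP FX)).
have [K [homK ->]] := hom_factors_through genm mE homF homG mGF.
exact: stably_zero_mull.
Qed.
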